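(* Consider the algorithm SR-DFF run with input $m$ on a stream consistent with some representation of size $m$ with at most $k$ exceptions. Then SR-DFF creates at most $m+k$ rules during the entire run.
   Context: Setting. $\mathcal{X}$ is a domain, $\mathcal{Y}$ a finite label set, $\Phi$ a set of binary features on $\mathcal{X}$ closed under negation. A representation of size $m$ is a cover $\mathcal{G}=\{G_1,\dots,G_m\}$ of $\mathcal{X}$ by components with labels $\ell(G)$; each $x$ has a fixed component $G(x)\ni x$; $c^*(x)=\ell(G(x))$; for components $G_i,G_j$ with different labels there is $\phi(G_i,G_j)\in\Phi$ true on all of $G_i$ and false on all of $G_j$, with $\phi(G_j,G_i)=\neg\phi(G_i,G_j)$. Protocol: the learner first gets $x_0$ with label $y_0$; then each example $x_t$ arrives, the learner predicts a label with an explanation example previously seen with that label; on a mistake the teacher gives $y_t=c^*(x_t)$ and $\phi(G(x_t),G(\hat x_t))$, $\hat x_t$ the explanation. An exception is an example on which the feedback is inconsistent with the representation/protocol; a stream is consistent with the representation with at most $k$ exceptions if at most $k$ examples are exceptions. SR-DFF (input $m$): receives $(x_0,y_0)$; maintains a list $L$ of rules, each indexed by a representative example $x$, with a conjunction $C[x]$ of features and a label $\texttt{label}[x]$. On $x_t$: if some $C[\hat x]\in L$ is satisfied by $x_t$, predict $\texttt{label}[\hat x]$ with explanation $\hat x$; if incorrect, receive $y_t,\phi$, set $C[\hat x]:=C[\hat x]\wedge\neg\phi$, and delete the rule if $C[\hat x]$ has at least $m$ features. Otherwise predict $y_0$ with explanation $x_0$; if incorrect, receive $y_t,\phi$ and add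 (create) a new rule with empty conjunction $C[x_t]$ and $\texttt{label}[x_t]=y_t$. *)

From mathcomp Require Import all_boot.
Set Implicit Arguments. Unset Strict Implicit. Unset Printing Implicit Defensive.

(* Features: an abstract type [F] of binary features on [X], evaluated by [ev];
   closure of the feature set under negation is given by [neg] with
   [ev (neg f) x = ~~ ev f x] (a hypothesis of the theorem). *)

(* A representation of size m: components G_i (i < m) with labels, a fixed
   component [comp_of x] containing each x (so the G_i cover X), and for every
   pair of components with different labels a separating feature [sep i j]
   true on G_i, false on G_j, with sep j i = neg (sep i j). *)
Record representation (X : Type) (Y : finType) (F : eqType)
    (ev : F -> X -> bool) (neg : F -> F) (m : nat) := Representation {
  comp_set : 'I_m -> X -> Prop;
  comp_lab : 'I_m -> Y;
  comp_of : X -> 'I_m;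
  comp_ofP : forall x, comp_set (comp_of x) x;
  sep : 'I_m -> 'I_m -> F;
  sep_true : forall i j, comp_lab i != comp_lab j ->
    forall x, comp_set i x -> ev (sep i j) x;
  sep_false : forall i j, comp_lab i != comp_lab j ->
    forall x, comp_set j x -> ~~ ev (sep i j) x;
  sep_anti : forall i j, comp_lab i != comp_lab j -> sep j i = neg (sep i j)
}.

Definition cstar X Y F ev neg m (R : @representation X Y F ev neg m) (x : X) : Y :=
  comp_lab R (comp_of R x).

(* Feedback (y, phi) on a mistake at x with explanation xh is an exception
   iff it is inconsistent with the representation: y <> c*(x), or phi is not
   phi(G(x), G(xh)) (which in particular must exist, i.e. labels differ). *)
Definition mistake_exception X Y F ev neg m (R : @representation X Y F ev neg m)
    (x : X) (y : Y) (f : F) (xh : X) : bool :=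
  [|| y != cstar R x,
      comp_lab R (comp_of R x) == comp_lab R (comp_of R xh)
    | f != sep R (comp_of R x) (comp_of R xh)].

Record rule (X : Type) (Y : Type) (F : Type) := Rule {
  rrep : X; rconj : seq F; rlab : Y }.

Definition sat X F (ev : F -> X -> bool) (C : seq F) (x : X) : bool :=
  all (fun f => ev f x) C.

(* One step of SR-DFF (input m, initial example (x0,y0)) on example x, where
   the teacher's label is y and its feature (used only on a mistake) is f.
   The output records the new rule list, whether a rule was created, and
   whether the example is an exception. If several rules are satisfied, any
   one of them may be used (nondeterminism). *)
Inductive srdff_step X Y F ev neg m (R : @representation X Y F ev neg m)
    (x0 : X) (y0 : Y)
    : seq (rule X Y F) -> X -> Y -> F -> seq (rule X Y F) -> bool -> bool -> Prop :=
| StepRuleCorrect L1 r L2 x y f :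
    sat ev (rconj r) x -> rlab r = y ->
    srdff_step R x0 y0 (L1 ++ r :: L2) x y f (L1 ++ r :: L2) false (y != cstar R x)
| StepRuleMistake L1 r L2 x y f :
    sat ev (rconj r) x -> rlab r != y ->
    srdff_step R x0 y0 (L1 ++ r :: L2) x y f
      (if m <= size (neg f :: rconj r) then L1 ++ L2
       else L1 ++ Rule (rrep r) (neg f :: rconj r) (rlab r) :: L2)
      false (mistake_exception R x y f (rrep r))
| StepDefaultCorrect L x y f :
    ~~ has (fun r => sat ev (rconj r) x) L -> y0 = y ->
    srdff_step R x0 y0 L x y f L false (y != cstar R x)
| StepDefaultMistake L x y f :
    ~~ has (fun r => sat ev (rconj r) x) L -> y0 != y ->
    srdff_step R x0 y0 L x y f (rcons L (Rule x [::] y)) true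
      (mistake_exception R x y f x0).

(* A run on a finite stream of (example, teacher label, teacher feature):
   [srdff_run R x0 y0 L s L' n e] : starting from rule list L, processing s
   leads to L', creating n rules, with e exceptions among the examples of s. *)
Inductive srdff_run X Y F ev neg m (R : @representation X Y F ev neg m)
    (x0 : X) (y0 : Y)
    : seq (rule X Y F) -> seq (X * Y * F) -> seq (rule X Y F) -> nat -> nat -> Prop :=
| RunNil L : srdff_run R x0 y0 L [::] L 0 0
| RunCons L x y f s L' b e L'' n k :
    srdff_step R x0 y0 L x y f L' b e ->
    srdff_run R x0 y0 L' s L'' n k ->
    srdff_run R x0 y0 L ((x, y, f) :: s) L'' (b + n) (e + k).

From mathcomp Require Import all_boot zify.
Set Implicit Arguments. Unset Strict Implicit. Unset Printing Implicit Defensive.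

(* Call a rule sound when its conjunction consists of distinct features
   phi(G_i, G_j), where G_i is the component of its representative and G_j
   ranges over components labelled differently from G_i. A sound rule fires on
   all of G_i, and it has fewer than m features, so it is never deleted.
   Consider the set of components that carry a sound rule. A rule is created
   only when no rule fires on x, so G(x) is not covered yet, and the new
   (empty, hence sound) rule covers it. Refining a sound rule with correct
   feedback adds a new separator, so the rule stays sound; deleting an unsound
   rule uncovers nothing. Hence only an exception can shrink the covered set,
   by at most one component, and the number of rules created is at most
   m + (number of exceptions). *)

Section SRDFFCoveredComponents.

Variables (X : Type) (Y : finType) (F : eqType).
Variables (ev : F -> X -> bool) (neg : F -> F).
Hypothesis ev_neg : forall f x, ev (neg f) x = ~~ ev f x.
Variables (m : nat) (R : @representation X Y F ev neg m).

Local Notation rule := (rule X Y F).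
Local Notation comp x := (comp_of R x).
Local Notation lab i := (comp_lab R i).

(* [neg (sep j i)] is the feature SR-DFF adds when a rule whose representative
   lies in G_i errs on an example of G_j; it holds on all of G_i. *)
Definition separators (i : 'I_m) : seq F :=
  [seq neg (sep R j i) | j <- enum [pred j | lab j != lab i]].

Definition sound_rule (r : rule) : bool :=
  uniq (rconj r) && all (mem (separators (comp (rrep r)))) (rconj r).

Definition covered (L : seq rule) : {set 'I_m} :=
  [set i | has (fun r => sound_rule r && (comp (rrep r) == i)) L].

Definition refined (L1 : seq rule) (r : rule) (L2 : seq rule) (f : F) : seq rule :=
  if m <= size (neg f :: rconj r) then L1 ++ L2
  else L1 ++ Rule (rrep r) (neg f :: rconj r) (rlab r) :: L2.

Lemma size_separators i : size (separators i) < m.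
Proof.
rewrite size_map -cardE -[X in _ < X]card_ord; apply: proper_card.
by apply/properP; split; [apply/subsetP | exists i; rewrite ?inE ?eqxx].
Qed.

Lemma sound_rule_size r : sound_rule r -> size (rconj r) < m.
Proof.
case/andP=> uniq_C /allP sub_C.
exact: leq_ltn_trans (uniq_leq_size uniq_C sub_C) (size_separators _).
Qed.

Lemma sound_rule_sat r x :
  sound_rule r -> comp x = comp (rrep r) -> sat ev (rconj r) x.
Proof.
case/andP=> _ /allP sub_C same_comp; apply/allP=> f /sub_C /mapP[j].
rewrite mem_enum inE => lab_j ->; rewrite ev_neg.
by apply: (sep_false lab_j); rewrite -same_comp; apply: comp_ofP.
Qed.

Lemma sound_rule_refine r x :
  sound_rule r -> sat ev (rconj r) x -> lab (comp x) != lab (comp (rrep r)) ->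
  sound_rule (Rule (rrep r) (neg (sep R (comp x) (comp (rrep r))) :: rconj r)
                   (rlab r)).
Proof.
case/andP=> uniq_C sub_C sat_x lab_x; rewrite /sound_rule /= uniq_C sub_C.
have sep_x : ev (sep R (comp x) (comp (rrep r))) x.
  by apply: (sep_true lab_x); apply: comp_ofP.
rewrite !andbT; apply/andP; split.
  by apply: contraL sep_x => /(allP sat_x); rewrite ev_neg.
by apply: map_f; rewrite mem_enum inE.
Qed.

Lemma no_exception_sep x y f xh :
  ~~ mistake_exception R x y f xh ->
  lab (comp x) != lab (comp xh) /\ f = sep R (comp x) (comp xh).
Proof. by rewrite !negb_or !negbK => /and3P[_ lab_x /eqP]. Qed.

Lemma covered_nil : covered [::] = set0.
Proof. by apply/setP=> i; rewrite !inE. Qed.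

Lemma covered_insert L1 r L2 : covered (L1 ++ L2) \subset covered (L1 ++ r :: L2).
Proof. by apply/subsetP=> i; rewrite !inE !has_cat /= => /orP[] ->; rewrite ?orbT. Qed.

Lemma covered_remove L1 r L2 :
  covered (L1 ++ r :: L2) \subset comp (rrep r) |: covered (L1 ++ L2).
Proof.
apply/subsetP=> i; rewrite !inE !has_cat /= => /or3P[-> | /andP[_ /eqP->] | ->];
  by rewrite ?eqxx ?orbT.
Qed.

Lemma covered_unsound L1 r L2 :
  ~~ sound_rule r -> covered (L1 ++ r :: L2) = covered (L1 ++ L2).
Proof. by move/negbTE=> unsound_r; apply/setP=> i; rewrite !inE !has_cat /= unsound_r. Qed.

Lemma covered_replace L1 r r' L2 :
  sound_rule r' -> rrep r' = rrep r ->
  covered (L1 ++ r :: L2) \subset covered (L1 ++ r' :: L2).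
Proof.
move=> sound_r' same_rep; apply/subsetP=> i; rewrite !inE !has_cat /= same_rep.
by case/or3P=> [-> | /andP[_ ->] | ->]; rewrite ?sound_r' ?orbT.
Qed.

Lemma covered_rcons_fresh L x y :
  covered (rcons L (Rule x [::] y)) = comp x |: covered L.
Proof. by apply/setP=> i; rewrite !inE -cats1 has_cat /= orbF orbC eq_sym. Qed.

Lemma uncovered_unsat L x :
  ~~ has (fun r => sat ev (rconj r) x) L -> comp x \notin covered L.
Proof.
rewrite inE; apply: contra; apply: sub_has => r /andP[sound_r /eqP same_comp].
exact: sound_rule_sat.
Qed.

Lemma covered_refined L1 r L2 x y f :
  sat ev (rconj r) x -> ~~ mistake_exception R x y f (rrep r) ->
  covered (L1 ++ r :: L2) \subset covered (refined L1 r L2 (sep R (comp x) (comp (rrep r)))).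
Proof.
move=> sat_x /no_exception_sep[lab_x _]; rewrite /refined.
have [sound_r | unsound_r] := boolP (sound_rule r); last first.
  rewrite covered_unsound //; case: ifP => _; first exact: subxx.
  exact: covered_insert.
have sound_r' := sound_rule_refine sound_r sat_x lab_x.
by rewrite leqNgt (sound_rule_size sound_r') /=; apply: covered_replace.
Qed.

Lemma covered_refined_exception L1 r L2 f :
  covered (L1 ++ r :: L2) \subset comp (rrep r) |: covered (refined L1 r L2 f).
Proof.
apply: subset_trans (covered_remove _ _ _) _; apply: setUS; rewrite /refined.
by case: ifP => _; [apply: subxx | apply: covered_insert].
Qed.

Lemma step_covered_card x0 y0 L x y f L' b ex :
  srdff_step R x0 y0 L x y f L' b ex -> b + #|covered L| <= #|covered L'| + ex.
Proof.
case=> {L x y f L' b ex} [* | L1 r L2 x y f sat_x _ | * | L x y f unsat_x _];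
  rewrite ?add0n ?leq_addr //.
- have [exc | no_exc] := boolP (mistake_exception R x y f (rrep r)).
    apply: leq_trans (subset_leq_card (covered_refined_exception _ _ _ f)) _.
    by rewrite cardsU1 addnC leq_add2l leq_b1.
  have [_ ->] := no_exception_sep no_exc.
  by rewrite addn0; apply/subset_leq_card/(covered_refined _ _ sat_x no_exc).
- by rewrite covered_rcons_fresh cardsU1 (uncovered_unsat unsat_x) leq_addr.
Qed.

Lemma run_covered_card x0 y0 L s L' n e :
  srdff_run R x0 y0 L s L' n e -> n + #|covered L| <= #|covered L'| + e.
Proof.
elim=> {L s L' n e} [L | L x y f s L' b e L'' n k step _ IH]; first by rewrite addn0.
by have := step_covered_card step; lia.
Qed.

Lemma srdff_run_created_le x0 y0 s L n e :
  srdff_run R x0 y0 [::] s L n e -> n <= m + e.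
Proof.
move/run_covered_card; rewrite covered_nil cards0 addn0 => /leq_trans; apply.
by rewrite leq_add2r -[X in _ <= X]card_ord max_card.
Qed.

End SRDFFCoveredComponents.

Theorem lemma4 (X : Type) (Y : finType) (F : eqType)
    (ev : F -> X -> bool) (neg : F -> F)
    (negP : forall f x, ev (neg f) x = ~~ ev f x)
    (m k : nat) (R : @representation X Y F ev neg m)
    (x0 : X) (y0 : Y) (s : seq (X * Y * F))
    (L : seq (rule X Y F)) (n e : nat) :
  srdff_run R x0 y0 [::] s L n e ->
  (y0 != cstar R x0) + e <= k ->
  n <= m + k.
Proof.
move=> /(srdff_run_created_le negP) created_le exceptions_le.
by rewrite (leq_trans created_le) // leq_add2l (leq_trans _ exceptions_le) ?leq_addl.
Qed.
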